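(* There exists a family $(\mathcal{A}_n)_{n\in\mathbb{N}}$ of (non-deterministic) generalised Büchi automata such that for every $n$, $\mathcal{A}_n$ has $n+1$ states and uses $2$ output colours, and every generalised Büchi automaton recognising $\mathcal{L}(\mathcal{A}_n)$ with the minimal number of states (among generalised Büchi automata recognising $\mathcal{L}(\mathcal{A}_n)$) uses at least $2^n$ output colours.
   Context: An automaton is a tuple $(Q,\Sigma,q_{\mathrm{init}},\Delta,\Gamma,\mathrm{col},W)$ with finite state set, finite input alphabet, initial state, transitions $\Delta\subseteq Q\times\Sigma\times Q$ (arbitrary, possibly non-deterministic), output alphabet $\Gamma$, labelling $\mathrm{col}:\Delta\to\Gamma$, acceptance condition $W\subseteq\Gamma^\omega$. A run on $w=a_1a_2\cdots$ is a sequence $(q_0,a_1,q_1)(q_1,a_2,q_2)\cdots$ of transitions with $q_0=q_{\mathrm{init}}$, accepting if its label sequence is in $W$; $\mathcal{L}(\mathcal{A})$ is the set of words with an accepting run. A generalised Büchi automaton with finite output colour set $C$ has $\Gamma=2^C$ and $W=\{x : \text{every } c\in C \text{ occurs in infinitely many letters of } x\}$; its number of output colours is $|C|$. *)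

From mathcomp Require Import all_boot.
Set Implicit Arguments. Unset Strict Implicit. Unset Printing Implicit Defensive.

(* A generalised Büchi automaton over the finite input alphabet Sigma.
   - gba_Q      : finite state set, gba_init : initial state
   - gba_delta  : transition relation Δ ⊆ Q × Σ × Q (as a boolean predicate)
   - gba_C      : finite set of output colours (output alphabet Γ = 2^C)
   - gba_col    : labelling of transitions by sets of colours; only its values
                  on transitions in Δ are relevant. *)
Record GBA (Sigma : finType) := {
  gba_Q : finType;
  gba_init : gba_Q;
  gba_delta : gba_Q -> Sigma -> gba_Q -> bool;
  gba_C : finType;
  gba_col : gba_Q -> Sigma -> gba_Q -> {set gba_C}
}.

(* An infinite word a_1 a_2 ... is encoded as w : nat -> Sigma (w i = a_(i+1)). *)
Definition is_run (Sigma : finType) (A : GBA Sigma) (w : nat -> Sigma)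
    (r : nat -> gba_Q A) : Prop :=
  r 0 = gba_init A /\ forall i, gba_delta (r i) (w i) (r i.+1).

Definition gba_accepting_run (Sigma : finType) (A : GBA Sigma) (w : nat -> Sigma)
    (r : nat -> gba_Q A) : Prop :=
  forall c : gba_C A, forall N : nat, exists i, N <= i /\ c \in gba_col (r i) (w i) (r i.+1).

Definition gba_accepts (Sigma : finType) (A : GBA Sigma) (w : nat -> Sigma) : Prop :=
  exists r : nat -> gba_Q A, @is_run Sigma A w r /\ @gba_accepting_run Sigma A w r.

Definition same_language (Sigma : finType) (B A : GBA Sigma) : Prop :=
  forall w, gba_accepts B w <-> gba_accepts A w.

Definition num_states (Sigma : finType) (A : GBA Sigma) : nat := #|gba_Q A|.
Definition num_colours (Sigma : finType) (A : GBA Sigma) : nat := #|gba_C A|.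

Definition state_minimal_for (Sigma : finType) (B A : GBA Sigma) : Prop :=
  same_language B A /\
  forall B' : GBA Sigma, same_language B' A -> num_states B <= num_states B'.

From mathcomp Require Import all_boot.
From Stdlib Require Import Classical.
Set Implicit Arguments. Unset Strict Implicit. Unset Printing Implicit Defensive.

(* The automaton [guess_gba n] reads the letter [None] (written # below) with
   both colours in its initial state, or guesses an index [j] and from then on
   reads [sym j b] with colour [b]; it accepts the words with infinitely many #
   or, for some [j], infinitely many [sym j true] and [sym j false].  A single
   state whose colours are the maps [g : 'I_n -> bool], the letter [sym j b]
   carrying [g] iff [g j != b], recognises the same language, so state-minimal
   automata for it have one state.  In a one-state automaton, for each [g] the
   word cycling through the letters [sym j (g j)] is rejected although all its
   letters can be read, so some colour [c g] is missing from all of them; when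
   [g j != h j] the word cycling through both blocks is accepted, which forces
   [c g != c h].  Hence [g |-> c g] is injective. *)

Definition inf_often (P : nat -> Prop) : Prop := forall N, exists i, N <= i /\ P i.

Definition inf_occ (T : eqType) (w : nat -> T) (x : T) : Prop :=
  inf_often (fun i => w i == x).

Lemma inf_often_impl_from (P Q : nat -> Prop) k :
  (forall i, k <= i -> P i -> Q i) -> inf_often P -> inf_often Q.
Proof.
move=> PQ infP N; have [i [le_i Pi]] := infP (maxn N k).
by rewrite geq_max in le_i; case/andP: le_i => Ni ki; exists i; split; last exact: PQ.
Qed.

Lemma inf_often_impl (P Q : nat -> Prop) :
  (forall i, P i -> Q i) -> inf_often P -> inf_often Q.
Proof. by move=> PQ; apply: (inf_often_impl_from (k := 0)) => i _; apply: PQ. Qed.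

Lemma inf_often_mem (T : eqType) (w : nat -> T) (s : seq T) :
  inf_often (fun i => w i \in s) -> exists2 x, x \in s & inf_occ w x.
Proof.
elim: s => [|x s IH] occ; first by have [i []] := occ 0.
have [x_inf | /not_all_ex_not[N x_fin]] := classic (inf_occ w x).
  by exists x; rewrite ?mem_head.
have [|y ys y_inf] := IH.
  apply: (inf_often_impl_from (k := N)) occ => i Ni; rewrite in_cons => /orP[wx | //].
  by case: x_fin; exists i.
by exists y; rewrite // in_cons ys orbT.
Qed.

Section CyclicWords.
Variables (T : eqType) (x0 : T).

Definition cyc (s : seq T) (k : nat) : T := nth x0 s (k %% size s).

Lemma mem_cyc s k : s != [::] -> cyc s k \in s.
Proof. by case: s => // x s _; rewrite mem_nth // ltn_mod. Qed.

Lemma cyc_index s x N : x \in s -> cyc s (N * size s + index x s) = x.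
Proof. by move=> xs; rewrite /cyc modnMDl modn_small ?index_mem ?nth_index. Qed.

Lemma all_cyc (P : pred T) s : s != [::] -> (forall i, P (cyc s i)) <-> all P s.
Proof.
move=> s0; split=> [Pcyc | /allP Ps i]; last exact/Ps/mem_cyc.
by apply/allP => x xs; rewrite -(cyc_index 0 xs).
Qed.

Lemma inf_often_cyc (P : pred T) s :
  s != [::] -> inf_often (fun i => P (cyc s i)) <-> has P s.
Proof.
move=> s0; split=> [occ | /hasP[x xs Px] N].
  by have [i [_ Pi]] := occ 0; apply/hasP; exists (cyc s i); rewrite ?mem_cyc.
exists (N * size s + index x s); rewrite cyc_index //; split=> //.
by apply: leq_trans (leq_addr _ _); rewrite leq_pmulr // lt0n size_eq0.
Qed.

Lemma inf_occ_cyc s x : s != [::] -> inf_occ (cyc s) x <-> x \in s.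
Proof. by move=> s0; rewrite -has_pred1; apply: inf_often_cyc. Qed.

End CyclicWords.

Section OneStateAutomata.
Variables (Sigma : finType) (B : GBA Sigma).
Hypothesis one_state : forall q : gba_Q B, q = gba_init B.

Let enabled x := gba_delta (gba_init B) x (gba_init B).
Let colours x := gba_col (gba_init B) x (gba_init B).

Lemma one_state_acceptsP w :
  gba_accepts B w <->
  (forall i, enabled (w i)) /\ forall c, inf_often (fun i => c \in colours (w i)).
Proof.
split=> [[r [[_ step] acc]] | [step acc]]; last by exists (fun=> gba_init B).
have run_init i : r i = gba_init B := one_state (r i).
split=> [i | c N]; first by have := step i; rewrite !run_init.
by have [i [Ni ci]] := acc c N; exists i; rewrite !run_init in ci.
Qed.

Lemma one_state_accepts_cyc x0 s : s != [::] ->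
  gba_accepts B (cyc x0 s) <->
  all enabled s /\ forall c, has (fun x => c \in colours x) s.
Proof.
move=> s0; rewrite one_state_acceptsP -(all_cyc x0 _ s0).
split=> -[E K]; split=> // c; have := K c;
  by rewrite (inf_often_cyc x0 (fun x => c \in colours x) s0).
Qed.

End OneStateAutomata.

Lemma state_minimal_one_state (Sigma : finType) (A B : GBA Sigma) :
  state_minimal_for B A ->
  (exists B1 : GBA Sigma, same_language B1 A /\ num_states B1 <= 1) ->
  forall q : gba_Q B, q = gba_init B.
Proof.
move=> [_ minB] [B1 [sameB1 B1_le1]].
have /card_le1_eqP B_le1 := leq_trans (minB _ sameB1) B1_le1.
by move=> q; apply: B_le1; rewrite inE.
Qed.

(* [None] is the letter #; [Some None] is a letter that is never coloured,
   needed so that the blocks below are non-empty even when [n = 0]. *)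
Definition letter (n : nat) : finType := option (option ('I_n * bool)).

Definition sym n (j : 'I_n) (b : bool) : letter n := Some (Some (j, b)).

Definition lang n (w : nat -> letter n) : Prop :=
  inf_occ w None \/ exists j, inf_occ w (sym j true) /\ inf_occ w (sym j false).

Definition guess_delta n (q : option 'I_n) (x : letter n) (q' : option 'I_n) :=
  match q, q' with
  | None, _ => true
  | Some j, Some j' => j == j'
  | Some _, None => false
  end.

Definition guess_col n (q : option 'I_n) (x : letter n) (q' : option 'I_n) :
    {set bool} :=
  match q, x with
  | None, None => setT
  | Some j, Some (Some (i, b)) => if i == j then [set b] else set0
  | _, _ => set0
  end.

Definition guess_gba n : GBA (letter n) :=
  {| gba_Q := option 'I_n; gba_init := None; gba_delta := @guess_delta n;
     gba_C := bool; gba_col := @guess_col n |}.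

Lemma guess_run_stays n (w : nat -> letter n) r k j :
  @is_run _ (guess_gba n) w r -> r k = Some j -> forall i, k <= i -> r i = Some j.
Proof.
move=> [_ step] rk i /subnKC <-; elim: (i - k) => [|m IH]; first by rewrite addn0.
by have := step (k + m); rewrite IH addnS /=; case: (r _) => // j' /eqP <-.
Qed.

Lemma guess_gbaP n (w : nat -> letter n) : gba_accepts (guess_gba n) w <-> lang w.
Proof.
split=> [[r [run acc]] | [sharp | [j [occ_t occ_f]]]].
- have [[k [j rk]] | never] := classic (exists k j, r k = Some j).
    have stay := guess_run_stays run rk.
    have occ b : inf_occ w (sym j b).
      apply: (inf_often_impl_from (k := k)) (acc b) => i ki.
      rewrite /= !stay ?(leq_trans ki) //.
      case: (w i) => [[[i' b'] |] |] /=; rewrite ?inE //.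
      by case: eqP => [-> | _]; rewrite ?inE // => /eqP ->.
    by right; exists j.
  left; apply: inf_often_impl (acc true) => i.
  have -> : r i = None by case E: (r i) => [j|] //; case: never; exists i, j.
  by case: (w i) => [x|]; rewrite /= ?inE.
- exists (fun=> None); split=> // c.
  by apply: inf_often_impl sharp => i /eqP ->; rewrite inE.
- exists (fun i => if i is 0 then None else Some j); split.
    by split=> // -[|i] /=; rewrite ?eqxx.
  have occ c : inf_occ w (sym j c) by case: c.
  move=> c; apply: (inf_often_impl_from (k := 1)) (occ c) => -[|i] // _ /eqP ->.
  by rewrite /= eqxx set11.
Qed.

Definition avoids n (g : {ffun 'I_n -> bool}) (x : letter n) : bool :=
  match x with
  | None => true
  | Some None => false
  | Some (Some (j, b)) => g j != b
  end.

Definition index_gba n : GBA (letter n) :=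
  {| gba_Q := unit; gba_init := tt; gba_delta _ _ _ := true;
     gba_C := {ffun 'I_n -> bool}; gba_col _ x _ := [set g | avoids g x] |}.

Lemma index_gbaP n (w : nat -> letter n) : gba_accepts (index_gba n) w <-> lang w.
Proof.
rewrite one_state_acceptsP; last by case.
split=> [[_ acc] | L]; last first.
  split=> // g; case: L => [sharp | [j [occ_t occ_f]]].
    by apply: inf_often_impl sharp => i /eqP ->; rewrite inE.
  by case gj: (g j); [apply: inf_often_impl occ_f | apply: inf_often_impl occ_t];
    move=> i /eqP ->; rewrite inE /= gj.
apply: NNPP => notL.
have [b b_fin] : exists b : 'I_n -> bool, forall j, ~ inf_occ w (sym j (b j)).
  apply: (@fin_all_exists _ (fun=> bool) (fun j b => ~ inf_occ w (sym j b))) => j.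
  apply: NNPP => all_inf.
  by apply: notL; right; exists j; split; apply: NNPP => fin; apply: all_inf;
    [exists true | exists false].
pose g := [ffun j => ~~ b j].
have [|x] := inf_often_mem (w := w) (s := enum [pred x | avoids g x]).
  by apply: inf_often_impl (acc g) => i; rewrite !inE mem_enum.
rewrite mem_enum inE; case: x => [[[j c] |] |] //= gjc x_inf.
  by apply: (b_fin j); move: gjc; rewrite ffunE; case: (b j) c x_inf => -[].
by apply: notL; left.
Qed.

Definition block n (g : {ffun 'I_n -> bool}) : seq (letter n) :=
  Some None :: [seq sym i (g i) | i <- enum 'I_n].

Lemma sym_in_block n (g : {ffun 'I_n -> bool}) j b : (sym j b \in block g) = (g j == b).
Proof.
rewrite in_cons /=; apply/mapP/eqP => [[i _ [-> ->]] // | <-].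
by exists j; rewrite ?mem_enum.
Qed.

Lemma sharp_notin_block n (g : {ffun 'I_n -> bool}) : None \notin block g.
Proof. by rewrite in_cons; apply/mapP => -[]. Qed.

Section OneStateColourBound.
Variables (n : nat) (B : GBA (letter n)).
Hypothesis one_state : forall q : gba_Q B, q = gba_init B.
Hypothesis B_lang : forall w, gba_accepts B w <-> lang w.

Let colours x := gba_col (gba_init B) x (gba_init B).

Lemma block_missing_colour g : exists c, all (fun x => c \notin colours x) (block g).
Proof.
have accepts_cyc := one_state_accepts_cyc one_state None.
have occ_block x : inf_occ (cyc None (block g)) x <-> x \in block g.
  exact: inf_occ_cyc.
have enabled : all (fun x => gba_delta (gba_init B) x (gba_init B)) (block g).
  have /accepts_cyc[] // : gba_accepts B (cyc None (None :: block g)).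
    by apply/B_lang; left; apply/inf_occ_cyc; rewrite ?mem_head.
  by rewrite /= => /andP[].
apply: NNPP => no_missing.
have /B_lang[/occ_block | [j [/occ_block + /occ_block]]] :
    gba_accepts B (cyc None (block g)).
- apply/accepts_cyc; split=> // c.
  rewrite -[has _ _]negbK -all_predC; apply/negP => missing.
  by apply: no_missing; exists c.
- exact/negP/sharp_notin_block.
- by rewrite !sym_in_block => /eqP ->.
Qed.

Lemma missing_colour_inj (f : {ffun 'I_n -> bool} -> gba_C B) :
  (forall g, all (fun x => f g \notin colours x) (block g)) -> injective f.
Proof.
move=> missing g h fgh; apply/ffunP => j; apply: NNPP => gh.
have : gba_accepts B (cyc None (block g ++ block h)).
  apply/B_lang; right; exists j.
  by split; apply/inf_occ_cyc; rewrite // mem_cat !sym_in_block;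
    case: (g j) (h j) gh => -[].
case/(one_state_accepts_cyc one_state) => // _ /(_ (f g)); rewrite has_cat.
case/orP => /hasP[x xs]; apply/negP.
  exact: (allP (missing g)).
by rewrite fgh; apply: (allP (missing h)).
Qed.

Lemma one_state_colours : 2 ^ n <= #|gba_C B|.
Proof.
have [f missing] := fin_all_exists block_missing_colour.
have := leq_card _ (missing_colour_inj missing).
by rewrite card_ffun card_bool card_ord.
Qed.

End OneStateColourBound.

Theorem proposition33 :
  exists (Sig : nat -> finType) (A : forall n : nat, GBA (Sig n)),
    forall n : nat,
      num_states (A n) = n.+1 /\
      num_colours (A n) = 2 /\
      (forall B : GBA (Sig n), state_minimal_for B (A n) -> 2 ^ n <= num_colours B).
Proof.
exists letter, guess_gba => n; split; first by rewrite /num_states card_option card_ord.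
split=> [|B minB]; first by rewrite /num_colours card_bool.
apply: one_state_colours.
  apply: state_minimal_one_state minB _; exists (index_gba n); split.
    by move=> w; rewrite index_gbaP guess_gbaP.
  by rewrite /num_states card_unit.
by move=> w; rewrite (proj1 minB) guess_gbaP.
Qed.
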